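(* Let $E|k$ be a finite extension of non-Archimedean local fields with residue degree $f$ and residue field $\kappa$ of $k$, and let $e'$ be a positive integer dividing $e(E|k)$ and coprime to $\mathrm{char}(\kappa)\sum_{i=0}^{f-1}(\#\kappa)^i$. Then there are a uniformizer $\pi_k$ of $k$ and $\alpha\in E$ with $\alpha^{e'}=\pi_k$.
   Context: $e(E|k)$ denotes the ramification index of $E|k$, $\mathrm{char}(\kappa)$ the characteristic of the residue field of $k$. *)

(* Non-Archimedean local fields are modelled as fields with a
   normalized discrete valuation, complete, with finite residue field. *)
From HB Require Import structures.
From mathcomp Require Import all_boot all_order all_algebra all_field.
Set Implicit Arguments. Unset Strict Implicit. Unset Printing Implicit Defensive.
Import Order.TTheory GRing.Theory Num.Theory.
Local Open Scope ring_scope.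

Section Valuations.
Variable K : fieldType.
Implicit Types (v : K -> int).

(* v is a normalized discrete valuation K^* ->> Z (values at 0 are irrelevant) *)
Definition is_dval v : Prop :=
  [/\ (forall x y : K, x != 0 -> y != 0 -> v (x * y) = v x + v y),
      (forall x y : K, x != 0 -> y != 0 -> x + y != 0 ->
          Num.min (v x) (v y) <= v (x + y))
    & (exists x : K, x != 0 /\ v x = 1)].

(* x lies in the fractional ideal pi^n O, i.e. x = 0 or v x >= n *)
Definition vge v (n : int) (x : K) : bool := (x == 0) || (n <= v x).

Definition vcomplete v : Prop :=
  forall u : nat -> K,
    (forall n : int, exists N : nat, forall i j : nat,
        (N <= i)%N -> (N <= j)%N -> vge v n (u i - u j)) ->
    exists l : K, forall n : int, exists N : nat, forall i : nat,
        (N <= i)%N -> vge v n (u i - l).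

(* s is a complete system of distinct representatives of the residue field O/m *)
Definition residue_system v (s : seq K) : Prop :=
  [/\ all (vge v 0) s,
      (forall i j : nat, (i < size s)%N -> (j < size s)%N -> i != j ->
          ~~ vge v 1 (s`_i - s`_j))
    & (forall x : K, vge v 0 x -> exists2 y, y \in s & vge v 1 (x - y))].

Definition residue_card v (q : nat) : Prop :=
  exists s : seq K, residue_system v s /\ size s = q.

Definition local_field v : Prop :=
  [/\ is_dval v, vcomplete v & exists q : nat, residue_card v q].

Definition residue_char v (p : nat) : Prop := prime p /\ vge v 1 (p%:R).

End Valuations.

(* Let E|k have ramification index e and residue degree f, let kappa_k have
   q elements and characteristic p, put d = 1 + q + ... + q^(f-1), and let
   e' | e be prime to p d.  For uniformizers pi_k, pi_E and g = pi_E^(e/e'),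
   u = pi_k / g^e' is a unit of E.  As (q-1) d = q^f - 1, the residue of u^d
   is a (q-1)-th root of unity of kappa_E; these all lie in kappa_k, so u^d is
   congruent to a unit of k.  Writing k1 e' = k2 d + 1 (Bezout), u^(k1 e') is
   then congruent to u w for a unit w of k, and Hensel's lemma (applicable as
   e' is prime to p) turns this into an exact e'-th root b of u w.  Hence
   (g b)^e' = pi_k w, and pi_k w is again a uniformizer of k. *)

From HB Require Import structures.
From mathcomp Require Import all_boot all_order all_algebra all_field.
From mathcomp Require Import zify ring.
Set Implicit Arguments. Unset Strict Implicit. Unset Printing Implicit Defensive.
Import Order.TTheory GRing.Theory Num.Theory.
Local Open Scope ring_scope.

Section Valuation.
Variables (K : fieldType) (v : K -> int).
Hypothesis hv : is_dval v.
Local Notation vge := (vge v).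

Lemma vM x y : x != 0 -> y != 0 -> v (x * y) = v x + v y.
Proof. by case: hv => vmul _ _; apply: vmul. Qed.

Lemma v1 : v 1 = 0.
Proof.
have h : v 1 = v 1 + v 1 by rewrite -{1}(mulr1 1) vM // oner_neq0.
lia.
Qed.

Lemma vN x : v (- x) = v x.
Proof.
have [->|x0] := eqVneq x 0; first by rewrite oppr0.
have vN1 : v (-1) = 0.
  have h : v 1 = v (-1) + v (-1) by rewrite -vM ?oppr_eq0 ?oner_neq0 // mulrNN mulr1.
  rewrite v1 in h; lia.
by rewrite -mulN1r vM ?vN1 ?add0r // oppr_eq0 oner_eq0.
Qed.

Lemma vV x : x != 0 -> v x^-1 = - v x.
Proof.
move=> x0; have := congr1 v (mulfV x0).
by rewrite vM ?invr_neq0 // v1 => /eqP; rewrite addr_eq0 => /eqP ->; rewrite opprK.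
Qed.

Lemma vX x n : x != 0 -> v (x ^+ n) = n%:Z * v x.
Proof.
move=> x0; elim: n => [|n IH]; first by rewrite expr0 v1 mul0r.
rewrite exprS vM ?expf_neq0 // IH; lia.
Qed.

Lemma vge0 n : vge n 0. Proof. by rewrite /vge eqxx. Qed.

Lemma vgeE n x : x != 0 -> vge n x = (n <= v x).
Proof. by move=> x0; rewrite /vge (negPf x0). Qed.

Lemma vge_le m n x : m <= n -> vge n x -> vge m x.
Proof. by rewrite /vge => mn /orP[->//|h]; rewrite (le_trans mn h) orbT. Qed.

Lemma vgeN n x : vge n (- x) = vge n x.
Proof. by rewrite /vge oppr_eq0 vN. Qed.

Lemma vgeD n x y : vge n x -> vge n y -> vge n (x + y).
Proof.
have [->|x0] := eqVneq x 0; first by rewrite add0r.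
have [->|y0] := eqVneq y 0; first by rewrite addr0.
have [->|s0] := eqVneq (x + y) 0; first by rewrite vge0.
case: hv => _ vadd _; rewrite !vgeE // => hx hy.
by apply: le_trans (vadd _ _ x0 y0 s0); rewrite le_min hx hy.
Qed.

Lemma vgeB n x y : vge n x -> vge n y -> vge n (x - y).
Proof. by move=> hx hy; apply: vgeD; rewrite ?vgeN. Qed.

Lemma vge_sum n (I : Type) (r : seq I) (F : I -> K) :
  (forall i, vge n (F i)) -> vge n (\sum_(i <- r) F i).
Proof. by move=> hF; elim/big_ind: _ => //; [apply: vge0 | apply: vgeD]. Qed.

Lemma vgeM m n x y : vge m x -> vge n y -> vge (m + n) (x * y).
Proof.
have [->|x0] := eqVneq x 0; first by move=> *; rewrite mul0r vge0.
have [->|y0] := eqVneq y 0; first by move=> *; rewrite mulr0 vge0.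
rewrite !vgeE ?mulf_neq0 // vM //; exact: lerD.
Qed.

Lemma vgeMl n x y : vge 0 x -> vge n y -> vge n (x * y).
Proof. by move=> hx hy; have := vgeM hx hy; rewrite add0r. Qed.

Lemma vgeMr n x y : vge n x -> vge 0 y -> vge n (x * y).
Proof. by move=> hx hy; have := vgeM hx hy; rewrite addr0. Qed.

Lemma vge01 : vge 0 1. Proof. by rewrite vgeE ?oner_eq0 // v1. Qed.

Lemma vgeX x n : vge 0 x -> vge 0 (x ^+ n).
Proof.
move=> hx; elim: n => [|n IH]; first by rewrite expr0 vge01.
by rewrite exprS vgeMl.
Qed.

Lemma vge_nat n : vge 0 n%:R.
Proof.
elim: n => [|n IH]; first exact: vge0.
by rewrite mulrS vgeD // vge01.
Qed.

Lemma vge_all x : (forall n, vge n x) -> x = 0.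
Proof.
move=> h; apply/eqP; have := h (v x + 1); rewrite /vge => /orP[//|].
rewrite -subr_ge0 opprD addrA subrr sub0r oppr_ge0 ler10 //.
Qed.

Definition vunit x := vge 0 x && ~~ vge 1 x.

Lemma vunitP x : vunit x -> x != 0 /\ v x = 0.
Proof.
case/andP; have [->|x0] := eqVneq x 0; first by rewrite !vge0.
rewrite !vgeE // => h0 h1; split => //; lia.
Qed.

Lemma vunitE x : x != 0 -> vunit x = (v x == 0).
Proof. by move=> x0; rewrite /vunit !vgeE //; lia. Qed.

Lemma vunitM x y : vunit x -> vunit y -> vunit (x * y).
Proof.
move=> /vunitP[x0 vx] /vunitP[y0 vy].
by rewrite vunitE ?mulf_neq0 // vM // vx vy.
Qed.

Lemma vunitV x : vunit x -> vunit x^-1.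
Proof.
by move=> /vunitP[x0 vx]; rewrite vunitE ?invr_neq0 // vV // vx oppr0.
Qed.

Lemma vunitX x n : vunit x -> vunit (x ^+ n).
Proof. by move=> /vunitP[x0 vx]; rewrite vunitE ?expf_neq0 // vX // vx mulr0. Qed.

Lemma vunit_nat n p : (0 < n)%N -> coprime n p -> vge 1 p%:R -> vunit n%:R.
Proof.
move=> n0 cnp hp; rewrite /vunit vge_nat /=; apply/negP => hn.
have [a b hab _] := egcdnP p n0; rewrite (eqP cnp) in hab.
have : vge 1 ((a * n)%:R - (b * p)%:R).
  by rewrite !natrM; apply: vgeB; apply: vgeMl => //; apply: vge_nat.
by rewrite hab natrD addrC addKr vgeE ?oner_eq0 // v1.
Qed.

Definition cong x y := vge 1 (x - y).

Lemma congxx x : cong x x. Proof. by rewrite /cong subrr vge0. Qed.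

Lemma congC x y : cong x y -> cong y x.
Proof. by rewrite /cong -opprB vgeN. Qed.

Lemma congT x y z : cong x y -> cong y z -> cong x z.
Proof. by rewrite /cong => h1 h2; rewrite -(subrKA y) vgeD. Qed.

Lemma congD x y x' y' : cong x x' -> cong y y' -> cong (x + y) (x' + y').
Proof. by rewrite /cong opprD addrACA; apply: vgeD. Qed.

Lemma congM x y x' y' : vge 0 x -> vge 0 y' -> cong x x' -> cong y y' ->
  cong (x * y) (x' * y').
Proof.
rewrite /cong => hx hy' h1 h2.
have -> : x * y - x' * y' = x * (y - y') + (x - x') * y' by ring.
by apply: vgeD; [apply: vgeMl | apply: vgeMr].
Qed.

Lemma congX x y n : vge 0 x -> vge 0 y -> cong x y -> cong (x ^+ n) (y ^+ n).
Proof.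
move=> hx hy hxy; elim: n => [|n IH]; first exact: congxx.
by rewrite !exprS congM // vgeX.
Qed.

Lemma cong_integral x y : vge 0 x -> cong x y -> vge 0 y.
Proof.
move=> hx hxy; have -> : y = x - (x - y) by rewrite opprB addrC subrK.
by rewrite vgeB //; apply: vge_le hxy.
Qed.

Lemma cong_unit x y : vunit x -> cong x y -> vunit y.
Proof.
move=> /andP[hx0 hx1] hxy; rewrite /vunit (cong_integral hx0 hxy) /=.
apply: contra hx1 => hy1; rewrite -(subrK y x) vgeD //.
Qed.

Section Hensel.
Hypothesis hc : vcomplete v.

(* The difference quotient of X^(n+1) at two points congruent to x0 is
   congruent to the derivative (n+1) x0^n. *)
Lemma cong_diff_quotient n a b x0 : vge 0 x0 -> cong a x0 -> cong b x0 ->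
  cong (\sum_(i < n.+1) a ^+ (n - i) * b ^+ i) (n.+1%:R * x0 ^+ n).
Proof.
move=> hx0 hax hbx.
have ha := cong_integral hx0 (congC hax).
have hb := cong_integral hx0 (congC hbx).
have -> : n.+1%:R * x0 ^+ n = \sum_(i < n.+1) x0 ^+ n.
  by rewrite sumr_const card_ord mulr_natl.
rewrite /cong -sumrB.
apply: vge_sum => i; rewrite -[in x0 ^+ n](subnK (ltnSE (ltn_ord i))) exprD.
exact: congM (vgeX _ ha) (vgeX _ hx0) (congX _ ha hx0 hax) (congX _ hb hx0 hbx).
Qed.

(* The simplified Newton map for X^(n+1) = c with a frozen derivative D. *)
Definition newton n (c D Y : K) : K := Y - (Y ^+ n.+1 - c) / D.

Lemma newton_step n c x0 D Y (j : nat) :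
  vge 0 x0 -> D = n.+1%:R * x0 ^+ n -> vunit D -> cong Y x0 ->
  vge j.+1%:Z (Y ^+ n.+1 - c) ->
  [/\ cong (newton n c D Y) x0, vge j.+1%:Z (newton n c D Y - Y)
    & vge j.+2%:Z (newton n c D Y ^+ n.+1 - c)].
Proof.
move=> hx0 hD uD hY herr; set Y' := newton _ _ _ _.
set t := (Y ^+ n.+1 - c) / D.
have [D0 _] := vunitP uD.
have ht : vge j.+1%:Z t by apply: vgeMr herr _; case/andP: (vunitV uD).
have eY' : Y' - Y = - t by rewrite /Y' /newton addrC addKr.
have eD : Y ^+ n.+1 - c = D * t by rewrite /t mulrCA mulfV ?mulr1.
have cY'Y : cong Y' Y by rewrite /cong eY' vgeN; apply: vge_le ht; lia.
have cY' : cong Y' x0 := congT cY'Y hY.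
split; [by [] | by rewrite eY' vgeN |].
have -> : Y' ^+ n.+1 - c = t * (D - \sum_(i < n.+1) Y' ^+ (n - i) * Y ^+ i).
  by rewrite -(subrKA (Y ^+ n.+1)) subrXX eY' eD; ring.
have -> : j.+2%:Z = j.+1%:Z + 1 by lia.
by apply: vgeM ht _; apply: congC; rewrite hD; exact: cong_diff_quotient.
Qed.

Definition fast_cauchy (y : nat -> K) := forall j : nat, vge j.+1%:Z (y j.+1 - y j).

Lemma fast_cauchy_tail y : fast_cauchy y ->
  forall N i : nat, (N <= i)%N -> vge N.+1%:Z (y i - y N).
Proof.
move=> hy N i /subnKC <-; elim: (i - N)%N => [|k IH].
  by rewrite addn0 subrr vge0.
by rewrite addnS -(subrKA (y (N + k)%N)) vgeD //; apply: vge_le (hy _); lia.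
Qed.

Lemma fast_cauchy_limit y : fast_cauchy y ->
  exists l, forall j : nat, vge j.+1%:Z (y j - l).
Proof.
move=> hy; have tail := fast_cauchy_tail hy.
have [l hl] : exists l, forall n : int, exists N : nat, forall i : nat,
    (N <= i)%N -> vge n (y i - l).
  apply: hc => m; exists `|m|%N => i j hi hj.
  have -> : y i - y j = (y i - y `|m|%N) - (y j - y `|m|%N).
    by rewrite opprB subrKA.
  by apply: vgeB; apply: vge_le (tail _ _ _) => //; lia.
exists l => j; have [N hN] := hl j.+1%:Z.
rewrite -(subrKA (y (maxn N j))) vgeD ?hN ?leq_maxl //.
by rewrite -opprB vgeN tail ?leq_maxr.
Qed.

Lemma hensel_root n c x0 : vunit n.+1%:R -> vunit c -> vge 0 x0 ->
  cong (x0 ^+ n.+1) c -> exists x, x ^+ n.+1 = c.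
Proof.
move=> uN uc hx0 hxc.
have ux0 : vunit x0.
  have /andP[_] : vunit (x0 ^+ n.+1) := cong_unit uc (congC hxc).
  by rewrite /vunit hx0; apply: contraNN => hx1; rewrite exprS vgeMr // vgeX.
have uD : vunit (n.+1%:R * x0 ^+ n) by rewrite vunitM // vunitX.
pose y j := iter j (newton n c (n.+1%:R * x0 ^+ n)) x0.
have inv j : cong (y j) x0 /\ vge j.+1%:Z (y j ^+ n.+1 - c).
  elim: j => [|j [cy hy]]; first by split; [apply: congxx | apply: hxc].
  by have [] := newton_step hx0 erefl uD cy hy.
have [l hl] : exists l, forall j : nat, vge j.+1%:Z (y j - l).
  apply: fast_cauchy_limit => j; have [cy hy] := inv j.
  by have [] := newton_step hx0 erefl uD cy hy.
exists l; apply/eqP; rewrite -subr_eq0; apply/eqP; apply: vge_all => m.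
have [cy herr] := inv `|m|%N.
have hy : vge 0 (y `|m|%N) := cong_integral hx0 (congC cy).
have hl0 : vge 0 l by apply: cong_integral hy _; apply: vge_le (hl _); lia.
have -> : l ^+ n.+1 - c = (y `|m|%N ^+ n.+1 - c) - (y `|m|%N ^+ n.+1 - l ^+ n.+1).
  by rewrite [RHS]addrC opprB subrKA.
apply: vge_le (_ : m <= `|m|.+1%:Z) _; first by lia.
rewrite vgeB // subrXX vgeMr //.
by apply: vge_sum => i; rewrite vgeMl // vgeX.
Qed.
End Hensel.

(* The residue field O/m, realized on a complete system of representatives s:
   every integral element reduces to the unique representative congruent to it. *)
Section ResidueField.
Variable s : seq K.
Hypothesis hs : residue_system v s.

Lemma rep_integral y : y \in s -> vge 0 y.
Proof. by case: hs => /allP hs0 _ _; apply: hs0. Qed.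

Lemma rep_uniq : uniq s.
Proof.
case: hs => _ hd _; apply/(uniqP 0) => i j hi hj eij.
apply/eqP; apply: contraT => nij.
by move: (hd i j hi hj nij); rewrite eij subrr vge0.
Qed.

Lemma rep_cong_eq a b : a \in s -> b \in s -> cong a b -> a = b.
Proof.
move=> ha hb hab; case: hs => _ hd _.
have [eij|nij] := eqVneq (index a s) (index b s).
  by rewrite -(nth_index 0 ha) -(nth_index 0 hb) eij.
have ia : (index a s < size s)%N by rewrite index_mem.
have ib : (index b s < size s)%N by rewrite index_mem.
by move: (hd _ _ ia ib nij); rewrite !nth_index // -/(cong a b) hab.
Qed.

Definition rep (x : K) : K := nth 0 s (find (cong x) s).

Lemma rep_spec x : vge 0 x -> rep x \in s /\ cong x (rep x).
Proof.
move=> hx; case: hs => _ _ /(_ x hx) [y ys hy].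
have hh : has (cong x) s by apply/hasP; exists y.
by split; [rewrite /rep mem_nth // -has_find | apply: nth_find].
Qed.

Definition residue_field (_ : is_dval v) (_ : residue_system v s) : Type :=
  seq_sub s.
Local Notation F := (residue_field hv hs).
HB.instance Definition _ := Finite.copy F (seq_sub s).

Definition red_default : F := SeqSub (proj1 (rep_spec (vge0 0))).

Definition red (x : K) : F := insubd red_default (rep x).

Lemma val_integral (a : F) : vge 0 (val a).
Proof. exact/rep_integral/ssvalP. Qed.

Lemma cong_red x : vge 0 x -> cong (val (red x)) x.
Proof.
by move=> hx; rewrite /red insubdK; case: (rep_spec hx) => // _ /congC.
Qed.

Lemma red_eq x y : vge 0 x -> vge 0 y -> cong x y -> red x = red y.
Proof.
move=> hx hy hxy; apply: val_inj; apply: rep_cong_eq; try exact: ssvalP.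
exact: congT (cong_red hx) (congT hxy (congC (cong_red hy))).
Qed.

Lemma red_val (a : F) : red (val a) = a.
Proof.
apply: val_inj; apply: rep_cong_eq; try exact: ssvalP.
exact: cong_red (val_integral a).
Qed.

Lemma red_inj x y : vge 0 x -> vge 0 y -> red x = red y -> cong x y.
Proof.
move=> hx hy e; apply: congT (congC (cong_red hx)) _.
by rewrite e; apply: cong_red.
Qed.

Ltac integral := repeat first [ exact: val_integral | exact: vge01 | exact: vge0
  | apply: vgeD | apply: vgeB | apply: vgeMl | rewrite vgeN ].

Definition addF (a b : F) := red (val a + val b).
Definition oppF (a : F) := red (- val a).
Definition mulF (a b : F) := red (val a * val b).

Lemma addFA : associative addF.
Proof.
move=> a b c; apply: red_eq; try by integral.
apply: congT (congD (congxx _) (cong_red _)) _; first by integral.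
by rewrite addrA; apply: congC; apply: congD (cong_red _) (congxx _); integral.
Qed.

Lemma addFC : commutative addF.
Proof. by move=> a b; rewrite /addF addrC. Qed.

Lemma add0F : left_id (red 0) addF.
Proof.
move=> a; rewrite /addF -[RHS]red_val; apply: red_eq; try by integral.
by rewrite -[X in cong _ X]add0r; apply: congD (cong_red _) (congxx _); integral.
Qed.

Lemma addNF : left_inverse (red 0) oppF addF.
Proof.
move=> a; apply: red_eq; try by integral.
by rewrite /oppF -(addNr (val a)); apply: congD (cong_red _) (congxx _); integral.
Qed.

HB.instance Definition _ := GRing.isZmodule.Build F addFA addFC add0F addNF.

Lemma mulFA : associative mulF.
Proof.
move=> a b c; apply: red_eq; try by integral.
apply: congT (congM _ _ (congxx _) (cong_red _)) _; try by integral.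
by rewrite mulrA; apply: congC; apply: congM (cong_red _) (congxx _); integral.
Qed.

Lemma mulFC : commutative mulF.
Proof. by move=> a b; rewrite /mulF mulrC. Qed.

Lemma mul1F : left_id (red 1) mulF.
Proof.
move=> a; rewrite /mulF -[RHS]red_val; apply: red_eq; try by integral.
by rewrite -[X in cong _ X]mul1r; apply: congM (cong_red _) (congxx _); integral.
Qed.

Lemma mulFDl : left_distributive mulF addF.
Proof.
move=> a b c; apply: red_eq; try by integral.
apply: congT (congM _ _ (cong_red _) (congxx _)) _; try by integral.
by rewrite mulrDl; apply: congC; apply: congD (cong_red _) (cong_red _); integral.
Qed.

Lemma not_cong10 : ~~ cong 1 0.
Proof. by rewrite /cong subr0 vgeE ?oner_eq0 // v1. Qed.

Lemma red1_neq0 : red 1 != red 0.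
Proof. by apply: contra not_cong10 => /eqP /red_inj; apply; integral. Qed.

HB.instance Definition _ :=
  GRing.Zmodule_isComNzRing.Build F mulFA mulFC mul1F mulFDl red1_neq0.

Lemma red_eq0 x : vge 0 x -> (red x == 0) = cong x 0.
Proof.
move=> hx; apply/eqP/idP => [|c]; first by move/red_inj; apply; integral.
exact: red_eq hx (vge0 0) c.
Qed.

Lemma val_unit (a : F) : a != 0 -> vunit (val a).
Proof.
move=> a0; rewrite /vunit val_integral /=; apply: contra a0 => ha1.
by rewrite -(red_val a) red_eq0 ?val_integral // /cong subr0.
Qed.

Lemma red_neq0 x : vunit x -> red x != 0.
Proof. by case/andP=> hx0 hx1; rewrite red_eq0 // /cong subr0. Qed.

Definition invF (a : F) : F := if a == 0 then 0 else red (val a)^-1.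

Lemma mulVF (a : F) : a != 0 -> invF a * a = 1.
Proof.
move=> a0; rewrite /invF (negPf a0).
have ua := val_unit a0.
have [a0' _] := vunitP ua.
have hi : vge 0 (val a)^-1 by case/andP: (vunitV ua).
apply: red_eq; try by integral.
apply: congT (congM _ _ (cong_red _) (congxx _)) _; try by integral.
by rewrite mulVf //; apply: congxx.
Qed.

Lemma invF0 : invF 0 = 0. Proof. by rewrite /invF eqxx. Qed.

HB.instance Definition _ := GRing.ComNzRing_isField.Build F mulVF invF0.

Lemma card_residue_field : #|{: F}| = size s.
Proof. exact/card_seq_sub/rep_uniq. Qed.

Lemma redM x y : vge 0 x -> vge 0 y -> red (x * y) = red x * red y.
Proof.
move=> hx hy; apply: red_eq; try by integral.
exact/congC/(congM (val_integral _) hy (cong_red hx) (cong_red hy)).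
Qed.

Lemma red1 : red 1 = 1. Proof. by []. Qed.

Lemma redX x n : vge 0 x -> red (x ^+ n) = red x ^+ n.
Proof.
move=> hx; elim: n => [|n IH]; first by rewrite !expr0.
by rewrite !exprS redM ?IH // vgeX.
Qed.

End ResidueField.
End Valuation.

Lemma fermat (G : finFieldType) (x : G) : x != 0 -> x ^+ #|G|.-1 = 1.
Proof.
move=> x0; have h := expf_card x.
rewrite -(ltn_predK (finNzRing_gt1 G)) exprS in h.
by apply: (mulfI x0); rewrite h mulr1.
Qed.

Section Extension.
Variables (k : fieldType) (E : fieldExtType k) (vk : k -> int) (vE : E -> int).
Variable e : nat.
Hypotheses (hvk : is_dval vk) (hvE : is_dval vE) (he : (0 < e)%N).
Hypothesis hAE : forall x : k, x != 0 -> vE x%:A = e%:Z * vk x.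

Lemma algX (x : k) n : (x ^+ n)%:A = x%:A ^+ n :> E.
Proof. exact: (rmorphXn (in_alg E)). Qed.

Lemma alg_vge (n : int) x : 0 <= n -> vge vk n x -> vge vE n x%:A.
Proof.
have [->|x0] := eqVneq x 0; first by move=> *; rewrite scale0r vge0.
rewrite !vgeE ?scaler_eq0 ?oner_eq0 ?orbF // hAE //; nia.
Qed.

Lemma alg_vge1 x : vge vE 1 x%:A = vge vk 1 x.
Proof.
have [->|x0] := eqVneq x 0; first by rewrite scale0r !vge0.
rewrite !vgeE ?scaler_eq0 ?oner_eq0 ?orbF // hAE //; nia.
Qed.

Lemma alg_cong x y : cong vE x%:A y%:A = cong vk x y.
Proof. by rewrite /cong -scalerBl alg_vge1. Qed.

Lemma alg_vunit x : vunit vk x -> vunit vE x%:A.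
Proof. by case/andP=> h0 h1; rewrite /vunit alg_vge // alg_vge1 h1. Qed.

Variables (sk : seq k) (sE : seq E) (q f : nat).
Hypotheses (hsk : residue_system vk sk) (hsE : residue_system vE sE).
Hypotheses (csk : size sk = q) (csE : size sE = (q ^ f)%N).
Local Notation Fk := (residue_field hvk hsk).
Local Notation FE := (residue_field hvE hsE).
Local Notation redk := (red hvk hsk).
Local Notation redE := (red hvE hsE).

Definition res_map (a : Fk) : FE := redE (val a)%:A.

Lemma res_map_red x : vge vk 0 x -> res_map (redk x) = redE x%:A.
Proof.
move=> hx; apply: red_eq; rewrite ?alg_vge ?val_integral // alg_cong.
exact: cong_red.
Qed.

Lemma res_map_inj : injective res_map.
Proof.
move=> a b /red_inj; rewrite !alg_vge ?val_integral // alg_cong => /(_ isT isT).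
by move/(red_eq hvk hsk); rewrite !val_integral !red_val; apply.
Qed.

Lemma res_mapX a n : res_map (a ^+ n) = res_map a ^+ n.
Proof.
have ha := val_integral a.
by rewrite -{1}(red_val a) -redX // res_map_red ?vgeX // algX redX ?alg_vge.
Qed.

Lemma res_map1 : res_map 1 = 1.
Proof. by rewrite -(red1 hvk hsk) res_map_red ?vge01 // scale1r. Qed.

Lemma card_residue_gt1 : (1 < q)%N.
Proof. by rewrite -csk -(card_residue_field hvk hsk) finNzRing_gt1. Qed.

(* Every (q-1)-th root of unity of kappa_E comes from a nonzero element of
   kappa_k: the q-1 images of kappa_k^* already exhaust the roots of
   X^(q-1) - 1. *)
Lemma root_of_unity_in_base (z : FE) : z ^+ q.-1 = 1 ->
  exists2 a : Fk, a != 0 & z = res_map a.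
Proof.
move=> zq; pose rs := map res_map (enum (predC1 (0 : Fk))).
have srs : size rs = q.-1.
  by rewrite size_map -cardE cardC1 card_residue_field csk.
have urs : uniq rs by rewrite map_inj_uniq ?enum_uniq //; apply: res_map_inj.
have [|zrs] := boolP (z \in rs).
  by case/mapP=> a; rewrite mem_enum => a0 ->; exists a.
have q1 : (0 < q.-1)%N by rewrite -subn1 subn_gt0 card_residue_gt1.
pose P : {poly FE} := 'X^(q.-1) - 1.
have P0 : P != 0 by rewrite -size_poly_eq0 size_XnsubC.
have rootsP : all (root P) (z :: rs).
  apply/allP => y; rewrite inE rootE !hornerE subr_eq0 => /predU1P[->|]; first exact/eqP.
  case/mapP=> a; rewrite mem_enum => a0 ->.
  rewrite -res_mapX -res_map1; apply/eqP; congr res_map; have := fermat a0.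
  by rewrite card_residue_field csk.
have := max_poly_roots P0 rootsP; rewrite /= zrs urs size_XnsubC // /= srs.
by rewrite ltnn => /(_ isT).
Qed.

(* Consequently the d-th power of a unit of E, d = 1 + q + ... + q^(f-1),
   is congruent to a unit of k, since (q-1) d = q^f - 1. *)
Lemma unit_power_in_base u : vunit vE u ->
  exists2 w : k, vunit vk w & cong vE (u ^+ (\sum_(i < f) q ^ i)) w%:A.
Proof.
move=> uu; have hu : vge vE 0 u by case/andP: uu.
have [|a a0 ea] := @root_of_unity_in_base (redE u ^+ \sum_(i < f) q ^ i).
  rewrite -exprM mulnC -predn_exp -csE -(card_residue_field hvE hsE).
  exact/fermat/red_neq0.
exists (val a); first exact: val_unit.
apply: (red_inj (hv:=hvE) (hs:=hsE)); rewrite ?vgeX ?alg_vge ?val_integral //.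
by rewrite redX // ea.
Qed.

(* If e' is prime to p d, every unit of E becomes an e'-th power after
   multiplication by a suitable unit of k: by Bezout, k' e' = k'' d + 1, so
   u^(k' e') = (u^d)^k'' u is congruent to u times a unit of k, and Hensel's
   lemma lifts this approximate e'-th root to an exact one. *)
Lemma unit_times_base_power (hcE : vcomplete vE) p e' u :
  vge vk 1 p%:R -> (0 < e')%N -> coprime e' (p * \sum_(i < f) q ^ i) ->
  vunit vE u -> exists2 w : k, vunit vk w & exists b : E, b ^+ e' = u * w%:A.
Proof.
rewrite coprimeMr => hp he' /andP[cp cd] uu; have hu : vge vE 0 u by case/andP: uu.
have [w uw hw] := unit_power_in_base uu.
have [k1 k2 hB _] := egcdnP (\sum_(i < f) q ^ i) he'; rewrite (eqP cd) in hB.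
exists (w ^+ k2); first exact: vunitX.
have [n en] : exists n, e' = n.+1 by exists e'.-1; rewrite prednK.
subst e'; apply: (hensel_root hvE hcE (x0 := u ^+ k1)).
- apply: (vunit_nat hvE he' cp).
  by rewrite -alg_vge1 in hp; rewrite -[_%:R]scaler_nat.
- by rewrite vunitM // alg_vunit // vunitX.
- exact: vgeX.
have hw0 : vge vk 0 w by case/andP: uw.
rewrite -exprM hB addn1 exprSr mulnC exprM algX [X in cong _ _ X]mulrC.
apply: (congM hvE (vgeX hvE _ (vgeX hvE _ hu)) hu _ (congxx _ _)).
exact: (congX hvE _ (vgeX hvE _ hu) (alg_vge (lexx 0) hw0) hw).
Qed.

End Extension.

Unset Implicit Arguments.
Set Strict Implicit.

Theorem mainTheorem17 (k : fieldType) (E : fieldExtType k)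
    (vk : k -> int) (vE : E -> int) (e f q p e' : nat) :
  local_field vk -> local_field vE ->
  (0 < e)%N ->
  (forall x : k, x != 0 -> vE (x%:A) = (e%:Z * vk x)) ->
  residue_card vk q -> residue_card vE (q ^ f)%N ->
  residue_char vk p ->
  (0 < e')%N -> (e' %| e)%N ->
  coprime e' (p * \sum_(i < f) q ^ i)%N ->
  exists (pik : k) (alpha : E),
    [/\ pik != 0, vk pik = 1 & alpha ^+ e' = pik%:A].
Proof.
move=> [hvk _ _] [hvE hcE _] he hAE [sk [hsk csk]] [sE [hsE csE]] [_ hp] he' dive cop.
have [pik [pik0 vpik]] : exists x : k, x != 0 /\ vk x = 1 by case: hvk.
have [piE [piE0 vpiE]] : exists x : E, x != 0 /\ vE x = 1 by case: hvE.
(* g^e' has the valuation e of pi_k, hence u = pi_k / g^e' is a unit of E. *)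
pose g := piE ^+ (e %/ e').
have ge'0 : g ^+ e' != 0 by rewrite !expf_neq0.
have pikA0 : pik%:A != 0 :> E by rewrite scaler_eq0 oner_eq0 orbF.
have uu : vunit vE (pik%:A / g ^+ e').
  rewrite vunitE ?mulf_neq0 ?invr_eq0 // vM ?invr_eq0 // vV //.
  by rewrite /g -exprM divnK // vX // hAE // vpiE vpik; apply/eqP; lia.
have [w uw [b hb]] :=
  unit_times_base_power hvk hvE he hAE hsk hsE csk csE hcE hp he' cop uu.
have [w0 vw] := vunitP uw.
exists (pik * w), (g * b); split; first by rewrite mulf_neq0.
  by rewrite vM // vpik vw addr0.
have -> : (pik * w)%:A = pik%:A * w%:A :> E := rmorphM (in_alg E) _ _.
by rewrite exprMn hb mulrA mulrCA mulfV // mulr1.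
Qed.
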